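(* Consider the equation $u_{tx}=u-i|u|^2u_x$. Let $k,\Omega\in\mathbb{R}$ and let $\varphi,\theta:\mathbb{R}\to\mathbb{R}$ be $C^2$ functions such that $u(x,t)=\varphi(x)e^{i(kx-\Omega t+\theta(x))}$ (i.e. a traveling wave of the form $\varphi(x-ct)e^{i(kx-\Omega t+\theta(x-ct))}$ with speed $c=0$) is a solution. Then $\varphi$ is constant. If moreover this constant is nonzero, then $\Omega\neq\varphi^2$ and $\theta_x$ is constant, given by $$\theta_x=\frac{k\varphi^2-k\Omega+1}{\Omega-\varphi^2}.$$ *)

From Stdlib Require Import Reals.
Open Scope R_scope.

Record Cx := mkC { Re : R; Im : R }.

Definition Cadd (z w : Cx) : Cx := mkC (Re z + Re w) (Im z + Im w).
Definition Csub (z w : Cx) : Cx := mkC (Re z - Re w) (Im z - Im w).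
Definition Cmul (z w : Cx) : Cx :=
  mkC (Re z * Re w - Im z * Im w) (Re z * Im w + Im z * Re w).
Definition Cofr (a : R) : Cx := mkC a 0.
Definition Ci : Cx := mkC 0 1.
Definition Cnorm2 (z : Cx) : R := Re z ^ 2 + Im z ^ 2.
Definition Cexpi (a : R) : Cx := mkC (cos a) (sin a).

Definition Cderiv (f : R -> Cx) (x : R) (l : Cx) : Prop :=
  derivable_pt_lim (fun y => Re (f y)) x (Re l) /\
  derivable_pt_lim (fun y => Im (f y)) x (Im l).

Definition is_solution (u : R -> R -> Cx) : Prop :=
  exists ut ux utx : R -> R -> Cx,
    (forall x t, Cderiv (fun s => u x s) t (ut x t)) /\
    (forall x t, Cderiv (fun y => u y t) x (ux x t)) /\
    (forall x t, Cderiv (fun y => ut y t) x (utx x t)) /\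
    (forall x t, utx x t =
        Csub (u x t) (Cmul Ci (Cmul (Cofr (Cnorm2 (u x t))) (ux x t)))).

Definition C2 (f : R -> R) : Prop :=
  exists f1 f2 : R -> R,
    (forall x, derivable_pt_lim f x (f1 x)) /\
    (forall x, derivable_pt_lim f1 x (f2 x)) /\
    continuity f2.

(* Write u(x,t) = phi(x) e^{i psi(x,t)} with psi = k x - Omega t + theta(x).
   Then u_t = -i Omega u, hence u_tx = -i Omega u_x, and
   u_x = (phi' + i phi (k + theta')) e^{i psi}.  Substituting into the
   equation and cancelling the unimodular factor e^{i psi} gives, pointwise,
     (Omega - phi^2) phi' = 0   and   (Omega - phi^2) phi (k + theta') = phi.
   These two equations force phi phi' = 0, so phi^2 and then phi are constant.
   For a nonzero constant c the second equation rules out Omega = c^2 and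
   can be solved for theta'. *)
From Stdlib Require Import Reals Lra FunctionalExtensionality.
Open Scope R_scope.

Ltac cx_ring := unfold Cmul, Csub, Cofr, Ci; simpl; apply f_equal2; ring.

Lemma Cderiv_unique (f : R -> Cx) (x : R) (l l' : Cx) :
  Cderiv f x l -> Cderiv f x l' -> l = l'.
Proof.
  intros [HRe HIm] [HRe' HIm'].
  destruct l as [a b], l' as [a' b']; simpl in *.
  apply f_equal2; eapply uniqueness_limite; eauto.
Qed.

Lemma Cderiv_scale (w : Cx) (f : R -> Cx) (x : R) (l : Cx) :
  Cderiv f x l -> Cderiv (fun y => Cmul w (f y)) x (Cmul w l).
Proof.
  intros [HRe HIm]; split; simpl.
  - apply derivable_pt_lim_minus;
      apply derivable_pt_lim_scal; assumption.
  - apply derivable_pt_lim_plus;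
      apply derivable_pt_lim_scal; assumption.
Qed.

Lemma Cderiv_polar (r a : R -> R) (x r' a' : R) :
  derivable_pt_lim r x r' -> derivable_pt_lim a x a' ->
  Cderiv (fun y => Cmul (Cofr (r y)) (Cexpi (a y))) x
         (Cmul (mkC r' (r x * a')) (Cexpi (a x))).
Proof.
  intros Hr Ha.
  assert (Hcos := derivable_pt_lim_comp a cos x a' (- sin (a x)) Ha
                    (derivable_pt_lim_cos (a x))).
  assert (Hsin := derivable_pt_lim_comp a sin x a' (cos (a x)) Ha
                    (derivable_pt_lim_sin (a x))).
  unfold comp in Hcos, Hsin.
  split; simpl.
  - replace (r' * cos (a x) - r x * a' * sin (a x))
      with ((r' * cos (a x) + r x * (- sin (a x) * a'))
            - (0 * sin (a x) + 0 * (cos (a x) * a'))) by ring.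
    apply derivable_pt_lim_minus.
    + apply (derivable_pt_lim_mult r (fun y => cos (a y))); assumption.
    + apply (derivable_pt_lim_mult (fun _ => 0) (fun y => sin (a y)));
        [apply derivable_pt_lim_const | assumption].
  - replace (r' * sin (a x) + r x * a' * cos (a x))
      with ((r' * sin (a x) + r x * (cos (a x) * a'))
            + (0 * cos (a x) + 0 * (- sin (a x) * a'))) by ring.
    apply derivable_pt_lim_plus.
    + apply (derivable_pt_lim_mult r (fun y => sin (a y))); assumption.
    + apply (derivable_pt_lim_mult (fun _ => 0) (fun y => cos (a y)));
        [apply derivable_pt_lim_const | assumption].
Qed.

(* e^{i a} is unimodular, so it can be cancelled from products. *)
Lemma Cmul_expi_cancel (z w : Cx) (a : R) :
  Cmul z (Cexpi a) = Cmul w (Cexpi a) -> z = w.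
Proof.
  intros E.
  pose proof (f_equal Re E) as ERe; pose proof (f_equal Im E) as EIm.
  destruct z as [zr zi], w as [wr wi]; simpl in ERe, EIm.
  assert (unit : sin a ^ 2 + cos a ^ 2 = 1)
    by (rewrite <- (sin2_cos2 a); unfold Rsqr; ring).
  apply f_equal2.
  - replace zr with (cos a * (zr * cos a - zi * sin a)
                     + sin a * (zr * sin a + zi * cos a))
      by (transitivity (zr * (sin a ^ 2 + cos a ^ 2)); [|rewrite unit]; ring).
    rewrite ERe, EIm.
    transitivity (wr * (sin a ^ 2 + cos a ^ 2)); [ring | rewrite unit; ring].
  - replace zi with (cos a * (zr * sin a + zi * cos a)
                     - sin a * (zr * cos a - zi * sin a))
      by (transitivity (zi * (sin a ^ 2 + cos a ^ 2)); [|rewrite unit]; ring).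
    rewrite ERe, EIm.
    transitivity (wi * (sin a ^ 2 + cos a ^ 2)); [ring | rewrite unit; ring].
Qed.

Lemma Cnorm2_polar (r a : R) : Cnorm2 (Cmul (Cofr r) (Cexpi a)) = r ^ 2.
Proof.
  unfold Cnorm2; simpl.
  transitivity (r ^ 2 * (sin a ^ 2 + cos a ^ 2)); [ring|].
  rewrite <- (sin2_cos2 a); unfold Rsqr; ring.
Qed.

(* A differentiable real function with f f' = 0 everywhere is constant:
   f^2 has derivative 2 f f' = 0, so f^2 is constant; if f vanishes somewhere
   then f = 0, otherwise f never vanishes, hence f' = 0. *)
Lemma constant_of_mul_deriv_zero (f f' : R -> R) :
  (forall x, derivable_pt_lim f x (f' x)) -> (forall x, f x * f' x = 0) ->
  exists c, forall x, f x = c.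
Proof.
  intros Hf Hff'.
  assert (null_deriv : forall g g' : R -> R,
            (forall x, derivable_pt_lim g x (g' x)) -> (forall x, g' x = 0) ->
            forall x, g x = g 0).
  { intros g g' Hg Hg0 x.
    apply (null_derivative_1 g (fun y => exist _ (g' y) (Hg y))).
    intro y; apply Hg0. }
  assert (square_const : forall x, f x * f x = f 0 * f 0).
  { apply (null_deriv (fun y => f y * f y) (fun y => f' y * f y + f y * f' y)).
    - intro y; apply (derivable_pt_lim_mult f f); apply Hf.
    - intro y; rewrite (Rmult_comm (f' y)), Hff'; ring. }
  destruct (Req_dec (f 0) 0) as [Z | Z].
  - exists 0; intro x; specialize (square_const x); rewrite Z in square_const.
    nra.
  - exists (f 0); apply (null_deriv f f' Hf); intro y.
    assert (f y <> 0)
      by (intro E; specialize (square_const y); rewrite E in square_const; nra).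
    destruct (Rmult_integral _ _ (Hff' y)); [contradiction | assumption].
Qed.

Section StationaryWave.

Variables (k Omega : R) (phi theta phi' theta' : R -> R).
Hypothesis phi_deriv : forall x, derivable_pt_lim phi x (phi' x).
Hypothesis theta_deriv : forall x, derivable_pt_lim theta x (theta' x).

Let phase (x t : R) : R := k * x - Omega * t + theta x.
Let wave (x t : R) : Cx := Cmul (Cofr (phi x)) (Cexpi (phase x t)).

Lemma wave_dt (x t : R) :
  Cderiv (fun s => wave x s) t (Cmul (mkC 0 (- Omega)) (wave x t)).
Proof.
  replace (Cmul (mkC 0 (- Omega)) (wave x t))
    with (Cmul (mkC 0 (phi x * - Omega)) (Cexpi (phase x t)))
    by (unfold wave; cx_ring).
  apply (Cderiv_polar (fun _ => phi x) (fun s => phase x s)).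
  - apply derivable_pt_lim_const.
  - unfold phase.
    replace (- Omega) with (0 - Omega * 1 + 0) by ring.
    apply derivable_pt_lim_plus; [apply derivable_pt_lim_minus|];
      [apply derivable_pt_lim_const | apply derivable_pt_lim_scal;
       apply derivable_pt_lim_id | apply derivable_pt_lim_const].
Qed.

Lemma wave_dx (x t : R) :
  Cderiv (fun y => wave y t) x
    (Cmul (mkC (phi' x) (phi x * (k + theta' x))) (Cexpi (phase x t))).
Proof.
  apply (Cderiv_polar phi (fun y => phase y t)); [apply phi_deriv|].
  unfold phase.
  replace (k + theta' x) with (k * 1 - 0 + theta' x) by ring.
  apply derivable_pt_lim_plus; [apply derivable_pt_lim_minus|];
    [apply derivable_pt_lim_scal; apply derivable_pt_lim_id
    | apply derivable_pt_lim_const | apply theta_deriv].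
Qed.

(* The equation, after cancelling e^{i psi}, splits into real and
   imaginary parts. *)
Lemma profile_equations :
  is_solution wave -> forall x,
    (Omega - phi x ^ 2) * phi' x = 0 /\
    (Omega - phi x ^ 2) * (phi x * (k + theta' x)) = phi x.
Proof.
  intros [ut [ux [utx [Hut [Hux [Hutx Heq]]]]]] x.
  set (w := mkC 0 (- Omega)).
  set (d := mkC (phi' x) (phi x * (k + theta' x))).
  assert (ut_eq : forall y s, ut y s = Cmul w (wave y s))
    by (intros y s; exact (Cderiv_unique _ _ _ _ (Hut y s) (wave_dt y s))).
  assert (ux_eq : ux x 0 = Cmul d (Cexpi (phase x 0)))
    by exact (Cderiv_unique _ _ _ _ (Hux x 0) (wave_dx x 0)).
  assert (utx_eq : utx x 0 = Cmul w (ux x 0)).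
  { apply (Cderiv_unique (fun y => ut y 0) x); [apply Hutx|].
    replace (fun y => ut y 0) with (fun y => Cmul w (wave y 0))
      by (apply functional_extensionality; intro y; now rewrite ut_eq).
    rewrite ux_eq; apply Cderiv_scale, wave_dx. }
  assert (reduced : Cmul w d = Csub (Cofr (phi x))
                                 (Cmul Ci (Cmul (Cofr (phi x ^ 2)) d))).
  { apply (Cmul_expi_cancel _ _ (phase x 0)).
    specialize (Heq x 0); rewrite utx_eq, ux_eq in Heq.
    unfold wave in Heq; rewrite Cnorm2_polar in Heq.
    transitivity (Cmul w (Cmul d (Cexpi (phase x 0)))); [cx_ring|].
    rewrite Heq; cx_ring. }
  pose proof (f_equal Re reduced) as ERe; pose proof (f_equal Im reduced) as EIm.
  simpl in ERe, EIm; split; lra.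
Qed.

End StationaryWave.

Theorem mainTheorem6 (k Omega : R) (phi theta : R -> R) :
  C2 phi -> C2 theta ->
  is_solution (fun x t =>
    Cmul (Cofr (phi x)) (Cexpi (k * x - Omega * t + theta x))) ->
  (exists c : R, forall x, phi x = c) /\
  (forall c : R, (forall x, phi x = c) -> c <> 0 ->
     Omega <> c ^ 2 /\
     forall x, derivable_pt_lim theta x
       ((k * c ^ 2 - k * Omega + 1) / (Omega - c ^ 2))).
Proof.
  intros [phi' [_ [Hphi _]]] [theta' [_ [Htheta _]]] Hsol.
  pose proof (profile_equations k Omega phi theta phi' theta' Hphi Htheta Hsol)
    as profile.
  split.
  - (* Either Omega = phi^2, and then phi = 0, or phi' = 0. *)
    apply (constant_of_mul_deriv_zero phi phi' Hphi); intro x.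
    destruct (profile x) as [E1 E2].
    destruct (Req_dec (Omega - phi x ^ 2) 0) as [Z | Z].
    + rewrite Z in E2; rewrite <- E2; ring.
    + destruct (Rmult_integral _ _ E1) as [? | flat]; [contradiction | rewrite flat; ring].
  - intros c Hc Hc0.
    assert (nonresonant : Omega - c ^ 2 <> 0).
    { intro Z; destruct (profile 0) as [_ E2].
      rewrite Hc, Z in E2; lra. }
    split; [lra|].
    intro x; destruct (profile x) as [_ E2]; rewrite Hc in E2.
    replace ((k * c ^ 2 - k * Omega + 1) / (Omega - c ^ 2)) with (theta' x);
      [apply Htheta|].
    apply (Rmult_eq_reg_l (c * (Omega - c ^ 2)));
      [|now apply Rmult_integral_contrapositive].
    field_simplify; [nra | assumption].
Qed.
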